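(* Let $(\mathfrak D,d)$ be a finite metric space, $p\in(1,\infty)$, $\vartheta\in\mathcal P(\mathfrak D)$, $\{\mu_k\}_{k\in\mathbb{N}}$ a countable dense subset of $(\mathcal P(\mathfrak D),W_p)$, and for each $k$ let $(\varphi_k,\psi_k)$ be functions on $\mathfrak D$ with $\psi_k=\varphi_k^c$, $\varphi_k=\psi_k^c$ and $W_p^p(\vartheta,\mu_k)=\int\varphi_k\,d\mu_k+\int\psi_k\,d\vartheta$. With $G_I(\mu):=\max_{k\in I}(\int\varphi_kd\mu+\int\psi_kd\vartheta)$ and $F(\mu):=W_p^p(\vartheta,\mu)$, \[\sup_{\mu\in\mathcal P(\mathfrak D)}|F(\mu)-G_{\{1,\dots,j\}}(\mu)|\to0\qquad\text{as }j\to\infty.\]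
   Context: $\mathcal P(\mathfrak D)$ is the set of probability measures on $\mathfrak D$, $W_p$ the $p$-Wasserstein distance with cost $d^p$; $\varphi^c(x):=\inf_{y\in\mathfrak D}(d(x,y)^p-\varphi(y))$. *)

From HB Require Import structures.
From mathcomp Require Import all_boot all_order all_algebra.
From mathcomp Require Import all_classical all_reals all_analysis.
Set Implicit Arguments. Unset Strict Implicit. Unset Printing Implicit Defensive.
Import Order.TTheory GRing.Theory Num.Theory.
Local Open Scope classical_set_scope.
Local Open Scope ring_scope.

Section Defs.
Variables (R : realType) (T : finType).

Definition is_metric (d : T -> T -> R) : Prop :=
  [/\ forall x y, 0 <= d x y,
      forall x y, d x y = 0 <-> x = y,
      forall x y, d x y = d y x &
      forall x y z, d x z <= d x y + d y z].

Definition is_prob (mu : T -> R) : Prop :=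
  (forall x, 0 <= mu x) /\ \sum_x mu x = 1.

Definition Prob : set (T -> R) := [set mu | is_prob mu].

Definition integ (f : T -> R) (mu : T -> R) : R := \sum_x f x * mu x.

Definition coupling (mu nu : T -> R) : set (T -> T -> R) :=
  [set pi | (forall x y, 0 <= pi x y) /\
            (forall x, \sum_y pi x y = mu x) /\
            (forall y, \sum_x pi x y = nu y)].

Definition Wpp (d : T -> T -> R) (p : R) (mu nu : T -> R) : R :=
  inf [set \sum_x \sum_y pi x y * (d x y `^ p) | pi in coupling mu nu].

Definition Wp (d : T -> T -> R) (p : R) (mu nu : T -> R) : R :=
  Wpp d p mu nu `^ (p^-1).

Definition ctrans (d : T -> T -> R) (p : R) (phi : T -> R) : T -> R :=
  fun x => inf [set d x y `^ p - phi y | y in [set: T]].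

End Defs.

From HB Require Import structures.
From mathcomp Require Import all_boot all_order all_algebra.
From mathcomp Require Import all_classical all_reals all_analysis.
From mathcomp Require Import lra.
Import Order.TTheory GRing.Theory Num.Theory numFieldNormedType.Exports.
Local Open Scope classical_set_scope.
Local Open Scope ring_scope.

Set Implicit Arguments.
Unset Strict Implicit.
Unset Printing Implicit Defensive.

(* Weak duality gives G_j <= F, so only an upper bound on F - G_j is needed.
   With D the largest cost d^p, both F and each dual functional
   nu |-> integ phi_k nu + integ psi_k theta are D-Lipschitz for the L1 distance:
   F because an optimal plan for (theta, mu) can be rerouted to one for
   (theta, nu) by moving only the mass where mu and nu differ, and the dual
   functional because phi_k = psi_k^c oscillates by at most D.  They agree at
   mu_k, so F - G_j <= 2 D |nu - mu_k|_1 whenever k <= j.  On a finite space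
   W_p^p dominates a multiple of the L1 distance, so (mu_k) is L1-dense, and
   since the simplex is covered by finitely many small grid cells, finitely
   many mu_k approximate every probability uniformly. *)

Section FiniteBounds.
Variables (R : realType) (I : finType).

Lemma finite_ub_ge0 (F : I -> R) : exists2 D, 0 <= D & forall i, F i <= D.
Proof.
exists (\big[Num.max/0]_i F i); first exact: bigmax_ge_id.
by move=> i; exact: le_bigmax.
Qed.

Lemma finite_lb_gt0 (P : pred I) (F : I -> R) :
  (forall i, P i -> 0 < F i) -> exists2 c, 0 < c & forall i, P i -> c <= F i.
Proof.
move=> F_gt0; exists (\big[Num.min/1]_(i | P i) F i).
  by apply/bigmin_gtP; split.
by move=> i; exact: bigmin_le_cond.
Qed.

Lemma finite_choice_bounded (P : I -> nat -> Prop) :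
  (forall i, exists k, P i k) -> exists K, forall i, exists2 k, (k <= K)%N & P i k.
Proof.
move=> /choice[f Pf]; exists (\max_i f i)%N => i.
by exists (f i); [exact: leq_bigmax | exact: Pf].
Qed.

End FiniteBounds.

Lemma norm_sup_image_le (R : realType) (U : Type) (A : set U) (f : U -> R) e :
  A !=set0 -> (forall u, A u -> `|f u| <= e) -> `|sup [set `|f u| | u in A]| <= e.
Proof.
move=> [u0 Au0] f_le; set E := [set `|f u| | u in A].
have E_ne0 : E !=set0 by exists `|f u0|, u0.
have E_ub : ubound E e by move=> _ [u Au <-]; exact: f_le.
rewrite ger0_norm; first exact: ge_sup.
have /(_ `|f u0|) E_le_sup := sup_upper_bound (conj E_ne0 (ex_intro _ e E_ub)).
by apply: le_trans (E_le_sup _); last exists u0.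
Qed.

Section L1Distance.
Variables (R : realType) (T : finType).
Implicit Types mu nu : T -> R.

Definition L1dist mu nu := \sum_x `|mu x - nu x|.

Lemma L1distC mu nu : L1dist mu nu = L1dist nu mu.
Proof. by apply: eq_bigr => x _; rewrite distrC. Qed.

Lemma L1dist_triangle mu nu rho :
  L1dist mu nu <= L1dist mu rho + L1dist rho nu.
Proof. by rewrite -big_split; apply: ler_sum => x _; exact: ler_distD. Qed.

Lemma prob_le1 mu x : is_prob mu -> mu x <= 1.
Proof. by case=> mu_ge0 <-; rewrite (bigD1 x) //= lerDl sumr_ge0. Qed.

Lemma integ_sub_le (f : T -> R) D mu nu : (forall y y', f y - f y' <= D) ->
  is_prob mu -> is_prob nu -> integ f mu - integ f nu <= D * L1dist mu nu.
Proof.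
move=> f_osc [_ mu1] [_ nu1].
have [y0 _|T0] := pickP (@predT T); last first.
  by move: mu1; rewrite big_pred0 // => /eqP; rewrite eq_sym oner_eq0.
have -> : integ f mu - integ f nu = \sum_x (f x - f y0) * (mu x - nu x).
  have sum_diff0 : \sum_x (mu x - nu x) = 0 by rewrite sumrB mu1 nu1 subrr.
  under [RHS]eq_bigr => x _ do rewrite mulrBl.
  rewrite [RHS]sumrB -mulr_sumr sum_diff0 mulr0 subr0 /integ -sumrB.
  by apply: eq_bigr => x _; rewrite mulrBr.
rewrite /L1dist mulr_sumr; apply: ler_sum => x _.
apply: le_trans (ler_norm _) _; rewrite normrM ler_wpM2r //.
by rewrite ler_norml f_osc andbT lerNl opprB f_osc.
Qed.

End L1Distance.

Section Couplings.
Variables (R : realType) (T : finType).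
Implicit Types (theta mu nu a : T -> R) (pi : T -> T -> R).

Lemma coupling_add mu1 nu1 pi1 mu2 nu2 pi2 :
  coupling mu1 nu1 pi1 -> coupling mu2 nu2 pi2 ->
  coupling (mu1 \+ mu2) (nu1 \+ nu2) (fun x y => pi1 x y + pi2 x y).
Proof.
move=> [pi1_ge0 [pi1_l pi1_r]] [pi2_ge0 [pi2_l pi2_r]].
split; first by move=> x y; rewrite addr_ge0.
by split=> z; rewrite big_split /= ?pi1_l ?pi2_l ?pi1_r ?pi2_r.
Qed.

Lemma coupling_scaled_prod mu nu :
  (forall x, 0 <= mu x) -> (forall y, 0 <= nu y) -> \sum_x mu x = \sum_y nu y ->
  coupling mu nu (fun x y => mu x * nu y / \sum_z nu z).
Proof.
move=> mu_ge0 nu_ge0 mass_eq; set m := \sum_z nu z.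
have [m0|m_neq0] := eqVneq m 0.
  have mu0 x : mu x = 0.
    by apply: (psumr_eq0P (P := predT) (fun i _ => mu_ge0 i)) => //; rewrite mass_eq.
  have nu0 y : nu y = 0 by apply: (psumr_eq0P (P := predT) (fun i _ => nu_ge0 i)).
  split; first by move=> x y; rewrite mu0 !mul0r.
  by split=> z; rewrite ?mu0 ?nu0 big1 // => ? _; rewrite ?mu0 ?nu0 !(mul0r, mulr0).
split; first by move=> x y; rewrite !mulr_ge0 ?invr_ge0 ?sumr_ge0.
split=> z.
  by rewrite -mulr_suml -mulr_sumr -/m mulfK.
by rewrite -mulr_suml -mulr_suml mass_eq -/m mulrC mulKf.
Qed.

Lemma coupling_exists mu nu : is_prob mu -> is_prob nu -> exists pi, coupling mu nu pi.
Proof.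
move=> [mu_ge0 mu1] [nu_ge0 nu1].
by eexists; apply: coupling_scaled_prod => //; rewrite mu1 nu1.
Qed.

Lemma coupling_mass mu nu pi : coupling mu nu pi -> \sum_x \sum_y pi x y = \sum_y nu y.
Proof. by move=> [_ [_ pi_r]]; rewrite exchange_big; apply: eq_bigr => y _; exact: pi_r. Qed.

(* If mu y = 0 then a y / mu y = 0, so column y vanishes, as it must when a y <= mu y. *)
Definition thin pi mu a x y := pi x y * (a y / mu y).

Lemma thin_le pi mu a x y : 0 <= pi x y -> 0 <= a y <= mu y -> thin pi mu a x y <= pi x y.
Proof.
move=> pi_ge0 /andP[a_ge0 a_le_mu]; rewrite /thin ler_piMr // -?(divr_ge0 a_ge0) //.
have [->|mu_neq0] := eqVneq (mu y) 0; first by rewrite invr0 mulr0.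
by rewrite ler_pdivrMr ?mul1r // lt_def mu_neq0 (le_trans a_ge0).
Qed.

Lemma coupling_thin theta mu a pi : coupling theta mu pi ->
  (forall y, 0 <= a y <= mu y) ->
  coupling (fun x => \sum_y thin pi mu a x y) a (thin pi mu a).
Proof.
move=> [pi_ge0 [_ pi_r]] a_bounds.
split=> [x y|].
  have /andP[a_ge0 a_le_mu] := a_bounds y.
  by rewrite /thin !mulr_ge0 ?invr_ge0 ?(le_trans a_ge0 a_le_mu).
split=> // y; rewrite /thin -mulr_suml pi_r; have /andP[a_ge0 a_le_mu] := a_bounds y.
have [mu0|mu_neq0] := eqVneq (mu y) 0; last by rewrite mulrC divfK.
by rewrite mu0 mul0r; apply/esym/le_anti; rewrite a_ge0 andbT -mu0.
Qed.

Definition offdiag pi x y := if x == y then 0 else pi x y.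

Lemma L1dist_le_offdiag_mass mu nu pi : coupling mu nu pi ->
  L1dist mu nu <= 2 * \sum_x \sum_y offdiag pi x y.
Proof.
move=> [pi_ge0 [pi_l pi_r]].
have offdiag_ge0 x y : 0 <= offdiag pi x y by rewrite /offdiag; case: eqP.
rewrite mulr2n mulrDl mul1r {2}exchange_big -big_split /=.
apply: ler_sum => x _; rewrite -big_split /=.
have -> : mu x - nu x = \sum_y (offdiag pi x y - offdiag pi y x).
  rewrite -pi_l -pi_r -sumrB; apply: eq_bigr => y _; rewrite /offdiag.
  by have [->|] := eqVneq x y; rewrite ?subrr // eq_sym => /negPf ->.
apply: le_trans (ler_norm_sum _ _ _) _; apply: ler_sum => y _.
by apply: le_trans (ler_normB _ _) _; rewrite !ger0_norm.
Qed.

End Couplings.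

Section OptimalTransport.
Variables (R : realType) (T : finType) (d : T -> T -> R) (p : R).
Implicit Types (mu nu theta : T -> R) (pi : T -> T -> R) (phi psi : T -> R).

Definition cost pi := \sum_x \sum_y pi x y * (d x y `^ p).

Lemma cost_ge0 pi : (forall x y, 0 <= pi x y) -> 0 <= cost pi.
Proof.
by move=> pi_ge0; do 2![apply: sumr_ge0 => ? _]; rewrite mulr_ge0 ?powR_ge0.
Qed.

Lemma Wpp_le_cost mu nu pi : coupling mu nu pi -> Wpp d p mu nu <= cost pi.
Proof.
move=> pi_mu_nu; apply: ge_inf; last by exists pi.
by exists 0 => _ [pi' [pi'_ge0 _] <-]; exact: cost_ge0.
Qed.

Lemma le_Wpp mu nu b : is_prob mu -> is_prob nu ->
  (forall pi, coupling mu nu pi -> b <= cost pi) -> b <= Wpp d p mu nu.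
Proof.
move=> mu_prob nu_prob b_lb; apply: lb_le_inf => [|_ [pi pi_mu_nu <-]].
  by have [pi pi_mu_nu] := coupling_exists mu_prob nu_prob; exists (cost pi), pi.
exact: b_lb.
Qed.

Lemma Wpp_ge0 mu nu : is_prob mu -> is_prob nu -> 0 <= Wpp d p mu nu.
Proof. by move=> mu_prob nu_prob; apply: le_Wpp => // pi [pi_ge0 _]; exact: cost_ge0. Qed.

Lemma ctrans_le phi x y : ctrans d p phi x <= d x y `^ p - phi y.
Proof.
apply: ge_inf; last by exists y.
exists (- \sum_z `|d x z `^ p - phi z|) => _ [z _ <-].
by apply: lerNnormlW; rewrite (bigD1 z) //= lerDl sumr_ge0.
Qed.

Lemma dual_le_Wpp phi theta nu : is_prob theta -> is_prob nu ->
  integ phi nu + integ (ctrans d p phi) theta <= Wpp d p theta nu.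
Proof.
move=> theta_prob nu_prob; apply: le_Wpp => // pi [pi_ge0 [pi_l pi_r]].
rewrite /integ; under eq_bigr => y _ do rewrite -pi_r mulr_sumr.
rewrite exchange_big /=; under [X in _ + X]eq_bigr => x _ do rewrite -pi_l mulr_sumr.
rewrite -big_split /=; apply: ler_sum => x _; rewrite -big_split /=.
apply: ler_sum => y _; rewrite mulrC [_ * pi x y]mulrC -mulrDr ler_wpM2l //.
by rewrite addrC -lerBrDr ctrans_le.
Qed.

Section BoundedCost.
Variable D : R.
Hypothesis cost_le : forall x y, d x y `^ p <= D.

Lemma cost_le_mass pi : (forall x y, 0 <= pi x y) -> cost pi <= D * \sum_x \sum_y pi x y.
Proof.
move=> pi_ge0; rewrite mulr_sumr; apply: ler_sum => x _; rewrite mulr_sumr.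
by apply: ler_sum => y _; rewrite mulrC ler_wpM2r.
Qed.

Lemma ctrans_sub_le psi y y' : ctrans d p psi y - ctrans d p psi y' <= D.
Proof.
rewrite lerBlDr -lerBlDl; apply: lb_le_inf => [|_ [z _ <-]].
  by exists (d y' y `^ p - psi y), y.
rewrite lerBlDl (le_trans (ctrans_le _ _ z)) // addrA lerD2r.
by rewrite (le_trans (cost_le y z)) // lerDl powR_ge0.
Qed.

Hypothesis D_ge0 : 0 <= D.

Lemma Wpp_le_add_L1dist theta mu nu : is_prob theta -> is_prob mu -> is_prob nu ->
  Wpp d p theta nu <= Wpp d p theta mu + D * L1dist mu nu.
Proof.
move=> theta_prob [mu_ge0 mu1] [nu_ge0 nu1].
rewrite -lerBlDr; apply: le_Wpp => // pi pi_coupling; rewrite lerBlDr.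
pose a y := Num.min (mu y) (nu y).
pose pi1 := thin pi mu a.
pose u x := theta x - \sum_y pi1 x y.
pose v y := nu y - a y.
have a_bounds y : 0 <= a y <= mu y by rewrite le_min mu_ge0 nu_ge0 ge_min lexx.
have pi1_coupling := coupling_thin pi_coupling a_bounds.
have pi1_le x y : pi1 x y <= pi x y by rewrite thin_le ?(proj1 pi_coupling).
have u_ge0 x : 0 <= u x.
  by rewrite subr_ge0 -(proj1 (proj2 pi_coupling)); apply: ler_sum => y _; exact: pi1_le.
have v_ge0 y : 0 <= v y by rewrite subr_ge0 ge_min lexx orbT.
have mass_eq : \sum_x u x = \sum_y v y.
  by rewrite !sumrB (coupling_mass pi1_coupling) nu1 (proj2 theta_prob).
have pi2_coupling := coupling_scaled_prod u_ge0 v_ge0 mass_eq.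
have theta_split : (fun x => \sum_y pi1 x y) \+ u = theta.
  by apply/funext => x /=; rewrite addrC subrK.
have nu_split : a \+ v = nu by apply/funext => y /=; rewrite addrC subrK.
have := coupling_add pi1_coupling pi2_coupling.
rewrite theta_split nu_split => pi'_coupling.
apply: le_trans (Wpp_le_cost pi'_coupling) _.
rewrite /cost; under eq_bigr => x _ do under eq_bigr => y _ do rewrite mulrDl.
under eq_bigr => x _ do rewrite big_split /=; rewrite big_split /=; apply: lerD.
  by do 2![apply: ler_sum => ? _]; rewrite ler_wpM2r ?powR_ge0.
apply: le_trans (cost_le_mass (proj1 pi2_coupling)) _.
rewrite (coupling_mass pi2_coupling) ler_wpM2l //; apply: ler_sum => y _.
by rewrite /v /a; case: (leP (mu y) (nu y)) => _;
  [rewrite distrC ler_norm | rewrite subrr].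
Qed.

Lemma Wpp_sub_dual_le theta mu nu phi psi :
  phi = ctrans d p psi -> Wpp d p theta mu = integ phi mu + integ psi theta ->
  is_prob theta -> is_prob mu -> is_prob nu ->
  Wpp d p theta nu - (integ phi nu + integ psi theta) <= 2 * D * L1dist mu nu.
Proof.
move=> phiE dualE theta_prob mu_prob nu_prob.
have := Wpp_le_add_L1dist theta_prob mu_prob nu_prob.
have := integ_sub_le (ctrans_sub_le psi) mu_prob nu_prob.
by rewrite -phiE dualE; lra.
Qed.

End BoundedCost.

Section SeparatedCost.
Variable c : R.
Hypothesis cost_ge : forall x y, x != y -> c <= d x y `^ p.

Lemma offdiag_mass_le_cost pi : (forall x y, 0 <= pi x y) ->
  c * \sum_x \sum_y offdiag pi x y <= cost pi.
Proof.
move=> pi_ge0; rewrite mulr_sumr; apply: ler_sum => x _; rewrite mulr_sumr.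
apply: ler_sum => y _; rewrite /offdiag; have [->|x_neq_y] := eqVneq x y.
  by rewrite mulr0 mulr_ge0 ?powR_ge0.
by rewrite mulrC ler_wpM2l ?cost_ge.
Qed.

Hypothesis c_ge0 : 0 <= c.

Lemma L1dist_le_Wpp mu nu : is_prob mu -> is_prob nu ->
  c / 2 * L1dist mu nu <= Wpp d p mu nu.
Proof.
move=> mu_prob nu_prob; apply: le_Wpp => // pi pi_mu_nu.
apply: le_trans (offdiag_mass_le_cost (proj1 pi_mu_nu)).
rewrite (le_trans (ler_wpM2l _ (L1dist_le_offdiag_mass pi_mu_nu))) ?divr_ge0 //.
by rewrite mulrA divfK ?pnatr_eq0.
Qed.

End SeparatedCost.

End OptimalTransport.

Section UniformDensity.
Variables (R : realType) (T : finType).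
Implicit Types (mu nu : T -> R) (N : nat).

Definition grid_round N nu : {ffun T -> 'I_N.+1} :=
  [ffun x => inord (Num.truncn (N%:R * nu x))].

Definition in_cell N (g : {ffun T -> 'I_N.+1}) nu :=
  forall x, `|nu x - (g x)%:R / N%:R| <= N%:R^-1.

Lemma in_cell_round N nu : (0 < N)%N -> is_prob nu -> in_cell (grid_round N nu) nu.
Proof.
move=> N_gt0 nu_prob x; have N_gt0' : 0 < N%:R :> R by rewrite ltr0n.
have Nnu_ge0 : 0 <= N%:R * nu x by rewrite mulr_ge0 ?ler0n ?(proj1 nu_prob).
rewrite ffunE inordK; last first.
  rewrite ltnS truncn_le_nat (le_lt_trans (_ : _ <= N%:R)) ?ltr_nat //.
  by rewrite ler_piMr ?ler0n ?prob_le1.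
have /andP[trunc_le trunc_gt] := truncn_itv Nnu_ge0.
set t := Num.truncn _ in trunc_le trunc_gt *.
rewrite -[nu x](mulKf (lt0r_neq0 N_gt0')) [X in _ - X]mulrC -mulrBr normrM.
rewrite gtr0_norm ?invr_gt0 // ler_piMr ?invr_ge0 ?ler0n // ler_norml.
by rewrite -natr1 in trunc_gt; apply/andP; split; lra.
Qed.

Lemma L1dist_in_cell N (g : {ffun T -> 'I_N.+1}) mu nu :
  in_cell g mu -> in_cell g nu -> L1dist mu nu <= #|T|%:R * (2 / N%:R).
Proof.
move=> mu_cell nu_cell; rewrite mulr_natl -sumr_const; apply: ler_sum => x _.
apply: le_trans (ler_distD ((g x)%:R / N%:R) _ _) _; rewrite [X in _ + X]distrC.
by apply: le_trans (lerD (mu_cell x) (nu_cell x)) _; rewrite -mulr2n mulr_natl.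
Qed.

Lemma L1dist_dense_uniform (mu : nat -> T -> R) :
  (forall nu, is_prob nu -> forall eta, 0 < eta -> exists k, L1dist (mu k) nu < eta) ->
  forall eta, 0 < eta -> exists K, forall nu, is_prob nu ->
    exists2 k, (k <= K)%N & L1dist (mu k) nu < eta.
Proof.
move=> mu_dense eta eta_gt0.
pose N := (Num.truncn (4 * #|T|%:R / eta)).+1.
have N_gt0' : 0 < N%:R :> R by rewrite ltr0n.
have cell_small : #|T|%:R * (2 / N%:R) < eta / 2.
  have := truncnS_gt (4 * #|T|%:R / eta); rewrite -/N ltr_pdivrMr // => N_big.
  by rewrite mulrA ltr_pdivrMr //; lra.
suff /finite_choice_bounded[K K_cells] : forall g : {ffun T -> 'I_N.+1},
    exists k, forall nu, is_prob nu -> in_cell g nu -> L1dist (mu k) nu < eta.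
  exists K => nu nu_prob; have [k k_le_K k_close] := K_cells (grid_round N nu).
  by exists k => //; apply: k_close => //; exact: in_cell_round.
move=> g; have [[nu0 [nu0_prob nu0_cell]]|no_prob] :=
  pselect (exists nu, is_prob nu /\ in_cell g nu); last first.
  by exists 0%N => nu nu_prob nu_cell; case: no_prob; exists nu.
have [k k_close] := mu_dense nu0 nu0_prob (eta / 2) (divr_gt0 eta_gt0 (ltr0Sn _ 1)).
exists k => nu nu_prob nu_cell; apply: le_lt_trans (L1dist_triangle _ _ nu0) _.
by have := L1dist_in_cell nu0_cell nu_cell; lra.
Qed.

End UniformDensity.

Lemma Wp_dense_L1dist_dense (R : realType) (T : finType) (d : T -> T -> R) (p c : R)
    (mu : nat -> T -> R) :
  0 < p -> 0 < c -> (forall x y, x != y -> c <= d x y `^ p) ->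
  (forall k, is_prob (mu k)) ->
  (forall nu, is_prob nu -> forall eps, 0 < eps -> exists k, Wp d p nu (mu k) < eps) ->
  forall nu, is_prob nu -> forall eta, 0 < eta -> exists k, L1dist (mu k) nu < eta.
Proof.
move=> p_gt0 c_gt0 cost_ge mu_prob Wp_dense nu nu_prob eta eta_gt0.
have c2_gt0 : 0 < c / 2 by rewrite divr_gt0.
have ceta_gt0 : 0 < c / 2 * eta by rewrite mulr_gt0.
have [k Wp_lt] := Wp_dense nu nu_prob _ (powR_gt0 p^-1 ceta_gt0).
have Wpp_lt : Wpp d p nu (mu k) < c / 2 * eta.
  rewrite ltNge; apply: contraTN Wp_lt => Wpp_ge; rewrite -leNgt.
  apply: ge0_ler_powR; rewrite ?invr_ge0 ?nnegrE ?(ltW p_gt0) ?(ltW ceta_gt0) //.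
  exact: Wpp_ge0.
exists k; rewrite L1distC -(ltr_pM2l c2_gt0).
exact: le_lt_trans (L1dist_le_Wpp cost_ge (ltW c_gt0) nu_prob (mu_prob k)) Wpp_lt.
Qed.

Theorem corollaryB7 (R : realType) (T : finType) (d : T -> T -> R) (p : R)
  (theta : T -> R) (mu : nat -> T -> R) (phi psi : nat -> T -> R) :
  is_metric d -> 1 < p -> is_prob theta ->
  (forall k, is_prob (mu k)) ->
  (forall nu, is_prob nu -> forall eps : R, 0 < eps ->
     exists k, Wp d p nu (mu k) < eps) ->
  (forall k, psi k = ctrans d p (phi k)) ->
  (forall k, phi k = ctrans d p (psi k)) ->
  (forall k, Wpp d p theta (mu k) = integ (phi k) (mu k) + integ (psi k) theta) ->
  let G := fun (j : nat) (nu : T -> R) =>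
    \big[Num.max/integ (phi 0%N) nu + integ (psi 0%N) theta]_(k < j.+1)
       (integ (phi k) nu + integ (psi k) theta) in
  (fun j : nat => sup [set `| Wpp d p theta nu - G j nu | | nu in Prob (R:=R) (T:=T)])
    @ \oo --> 0.
Proof.
move=> [d_ge0 d_eq0 _ _] p_gt1 theta_prob mu_prob Wp_dense psiE phiE dualE G.
have [D D_ge0 cost_le] := finite_ub_ge0 (fun xy : T * T => d xy.1 xy.2 `^ p).
have [c c_gt0 cost_ge] :
    exists2 c, 0 < c & forall xy : T * T, xy.1 != xy.2 -> c <= d xy.1 xy.2 `^ p.
  apply: finite_lb_gt0 => -[x y] /= x_neq_y; apply: powR_gt0; rewrite lt_def d_ge0 andbT.
  by apply: contra_neq x_neq_y; exact: (proj1 (d_eq0 x y)).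
have gap_bound j nu k : is_prob nu -> (k < j.+1)%N ->
    0 <= Wpp d p theta nu - G j nu <= 2 * D * L1dist (mu k) nu.
  move=> nu_prob k_lt; rewrite subr_ge0; apply/andP; split.
    by apply: bigmax_le => [|i _]; rewrite psiE; exact: dual_le_Wpp.
  apply: le_trans (Wpp_sub_dual_le (fun x y => cost_le (x, y)) D_ge0 (phiE k) (dualE k)
    theta_prob (mu_prob k) nu_prob).
  by rewrite lerB // (le_bigmax _ _ (Ordinal k_lt)).
apply/cvgr0Pnorm_le => eps eps_gt0.
have [K K_close] := L1dist_dense_uniform
  (Wp_dense_L1dist_dense (lt_trans ltr01 p_gt1) c_gt0 (fun x y => cost_ge (x, y)) mu_prob Wp_dense)
  (divr_gt0 eps_gt0 (ltr_wpDl (mulr_ge0 (ler0n _ 2) D_ge0) ltr01)).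
exists K => // j /= K_le_j; apply: norm_sup_image_le; first by exists theta.
move=> nu nu_prob; have [k k_le_K k_close] := K_close nu nu_prob.
have /andP[gap_ge0 gap_le] := gap_bound j nu k nu_prob (leq_trans k_le_K K_le_j).
rewrite ger0_norm // (le_trans gap_le) // (le_trans (ler_wpM2l _ (ltW k_close))) ?mulr_ge0 //.
by rewrite mulrA ler_pdivrMr ?ltr_wpDl ?mulr_ge0 //; nra.
Qed.
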